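(* Let $\mathbf{u},\mathbf{v}\in\mathbb{R}^2$ be fixed linearly independent unit vectors, and let $D_1\subset\mathbb{R}^2$ be an open disc of radius $r_1$ centered at the origin. Let $\mathbf{f}=(f_1,f_2)$ be a vector field on $\mathbb{R}^2$ with $f_1,f_2\in C^2_c(D_1)$. Then the longitudinal V-line transform satisfies $\mathcal{L}\mathbf{f}\equiv 0$ on $\mathbb{R}^2$ if and only if $\mathbf{f}=\nabla V$ for some scalar function $V$.
   Context: For a function $h$ on $\mathbb{R}^2$ and a unit vector $\mathbf{u}$, the divergent beam transform is $\mathcal{X}_{\mathbf{u}}h(\mathbf{x})=\int_0^\infty h(\mathbf{x}+t\mathbf{u})\,dt$. The longitudinal V-line transform of $\mathbf{f}$ (with respect to the fixed directions $\mathbf{u},\mathbf{v}$) is the function on $\mathbb{R}^2$ given by $\mathcal{L}\mathbf{f}=-\mathcal{X}_{\mathbf{u}}(\mathbf{f}\cdot\mathbf{u})+\mathcal{X}_{\mathbf{v}}(\mathbf{f}\cdot\mathbf{v})$, where $\cdot$ is the Euclidean dot product. *)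

From Stdlib Require Import Reals.
From Coquelicot Require Import Coquelicot.
Open Scope R_scope.

(* Scalar functions on R^2 are curried: g : R -> R -> R, g x y = g(x,y). *)

Definition partial1 (g : R -> R -> R) (x y : R) : R := Derive (fun t => g t y) x.
Definition partial2 (g : R -> R -> R) (x y : R) : R := Derive (fun t => g x t) y.

Definition continuous2 (g : R -> R -> R) : Prop :=
  forall x y : R, continuous (fun p : R * R => g (fst p) (snd p)) (x, y).

Definition C1_2d (g : R -> R -> R) : Prop :=
  continuous2 g /\
  (forall x y, ex_derive (fun t => g t y) x /\ ex_derive (fun t => g x t) y) /\
  continuous2 (partial1 g) /\ continuous2 (partial2 g).

Definition C2_2d (g : R -> R -> R) : Prop :=
  C1_2d g /\ C1_2d (partial1 g) /\ C1_2d (partial2 g).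

(* Support (closure of {g <> 0}) is a compact subset of the open disc of
   radius r1 centred at 0; equivalently g vanishes outside some closed disc
   of radius r < r1. *)
Definition supp_in_disc (g : R -> R -> R) (r1 : R) : Prop :=
  exists r, 0 <= r < r1 /\ forall x y, r ^ 2 <= x ^ 2 + y ^ 2 -> g x y = 0.

Definition beam (h : R -> R -> R) (u1 u2 : R) (x y : R) : R :=
  RInt_gen (fun t => h (x + t * u1) (y + t * u2)) (at_point 0) (Rbar_locally p_infty).

Definition LVT (f1 f2 : R -> R -> R) (u1 u2 v1 v2 : R) (x y : R) : R :=
  - beam (fun a b => f1 a b * u1 + f2 a b * u2) u1 u2 x y
  + beam (fun a b => f1 a b * v1 + f2 a b * v2) v1 v2 x y.

(* If L f = 0, the beam transforms X_u (f.u) and X_v (f.v) agree; call their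
   common value -V.  By the fundamental theorem of calculus, differentiating a
   beam transform along its own direction w returns the integrand, so V has the
   continuous derivative f.u along u and f.v along v.  In the skew coordinates
   (s, t) |-> s u + t v these are continuous partial derivatives, and the chain
   rule gives grad V = f.  Conversely, if f = grad V then V is constant off the
   support and X_w (f.w) = C - V for both directions, so L f = 0. *)

From Stdlib Require Import Reals Lra.
From Coquelicot Require Import Coquelicot.
Open Scope R_scope.

Definition vanishes_outside (k : R -> R -> R) (r : R) : Prop :=
  forall a b, r ^ 2 <= a ^ 2 + b ^ 2 -> k a b = 0.

Lemma vanishes_outside_lincomb (f1 f2 : R -> R -> R) (r c1 c2 : R) :
  vanishes_outside f1 r -> vanishes_outside f2 r ->
  vanishes_outside (fun a b => f1 a b * c1 + f2 a b * c2) r.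
Proof. intros H1 H2 a b Hab. rewrite (H1 a b Hab), (H2 a b Hab). ring. Qed.

Lemma continuous2_lincomb (f1 f2 : R -> R -> R) (c1 c2 : R) :
  continuous2 f1 -> continuous2 f2 ->
  continuous2 (fun a b => f1 a b * c1 + f2 a b * c2).
Proof.
  intros H1 H2 x y.
  apply (continuous_plus (fun p : R * R => f1 (fst p) (snd p) * c1)
                         (fun p : R * R => f2 (fst p) (snd p) * c2)).
  - apply (continuous_mult (fun p : R * R => f1 (fst p) (snd p)) (fun _ => c1)).
    + apply H1.
    + apply continuous_const.
  - apply (continuous_mult (fun p : R * R => f2 (fst p) (snd p)) (fun _ => c2)).
    + apply H2.
    + apply continuous_const.
Qed.

Lemma continuous2_comp_linear (k : R -> R -> R) (a1 a2 b1 b2 : R) :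
  continuous2 k -> continuous2 (fun s t => k (s * a1 + t * b1) (s * a2 + t * b2)).
Proof.
  intros Hk s t.
  assert (Hlin : forall c1 c2,
    continuous (fun p : R * R => fst p * c1 + snd p * c2) (s, t)).
  { intros c1 c2.
    apply (continuous_plus (fun p : R * R => fst p * c1) (fun p : R * R => snd p * c2)).
    - apply (continuous_mult (fun p : R * R => fst p) (fun _ => c1)).
      + apply continuous_fst.
      + apply continuous_const.
    - apply (continuous_mult (fun p : R * R => snd p) (fun _ => c2)).
      + apply continuous_snd.
      + apply continuous_const. }
  apply (continuous_comp_2 (fun p : R * R => fst p * a1 + snd p * b1)
                           (fun p : R * R => fst p * a2 + snd p * b2) k).
  - apply Hlin.
  - apply Hlin.
  - apply Hk.
Qed.

Lemma continuous2_along_line (k : R -> R -> R) (x y w1 w2 t : R) :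
  continuous2 k -> continuous (fun s => k (x + s * w1) (y + s * w2)) t.
Proof.
  intros Hk.
  refine (@continuous_comp_2 R_UniformSpace R_UniformSpace R_UniformSpace R_UniformSpace
            (fun s => x + s * w1) (fun s => y + s * w2) k t _ _ _).
  - apply (ex_derive_continuous (fun s => x + s * w1)). auto_derive. easy.
  - apply (ex_derive_continuous (fun s => y + s * w2)). auto_derive. easy.
  - apply Hk.
Qed.

Lemma Rabs_le_1_of_unit (w1 w2 : R) :
  w1 ^ 2 + w2 ^ 2 = 1 -> Rabs w1 <= 1 /\ Rabs w2 <= 1.
Proof.
  intros Hw. split; rewrite <- Rabs_R1; apply Rsqr_le_abs_0; unfold Rsqr; nra.
Qed.

Lemma ray_leaves_disc (r x y w1 w2 t : R) :
  0 <= r -> w1 ^ 2 + w2 ^ 2 = 1 -> 2 * (Rabs x + Rabs y) + r <= t ->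
  r ^ 2 <= (x + t * w1) ^ 2 + (y + t * w2) ^ 2.
Proof.
  intros Hr Hw Ht.
  assert (Hdot : - (Rabs x + Rabs y) <= x * w1 + y * w2).
  { destruct (Rabs_le_1_of_unit w1 w2 Hw) as [Hw1 Hw2].
    pose proof (Rle_abs (- (x * w1))) as Ex. pose proof (Rle_abs (- (y * w2))) as Ey.
    rewrite Rabs_Ropp, Rabs_mult in Ex, Ey.
    pose proof (Rabs_pos x). pose proof (Rabs_pos y). nra. }
  pose proof (Rabs_pos x). pose proof (Rabs_pos y).
  replace ((x + t * w1) ^ 2 + (y + t * w2) ^ 2)
    with (x ^ 2 + y ^ 2 + 2 * t * (x * w1 + y * w2) + t ^ 2 * (w1 ^ 2 + w2 ^ 2)) by ring.
  rewrite Hw. nra.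
Qed.

Lemma RInt_vanishing_tail (g : R -> R) (T a b : R) :
  (forall t, T <= t -> g t = 0) -> T <= a -> T <= b -> RInt g a b = 0.
Proof.
  intros Hg Ha Hb.
  rewrite (RInt_ext g (fun _ => 0)).
  - rewrite RInt_const. apply (@scal_zero_r R_AbsRing R_NormedModule).
  - intros t [Hlo _]. apply Hg. unfold Rmin in Hlo. destruct (Rle_dec a b); lra.
Qed.

Lemma RInt_gen_vanishing_tail (g : R -> R) (a T : R) :
  (forall t, continuous g t) -> a <= T -> (forall t, T <= t -> g t = 0) ->
  RInt_gen g (at_point a) (Rbar_locally p_infty) = RInt g a T.
Proof.
  intros Hc HaT Hg.
  assert (Hex : forall b c, ex_RInt g b c)
    by (intros; apply (@ex_RInt_continuous R_CompleteNormedModule); auto).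
  apply is_RInt_gen_unique, filterlimi_locally. intros eps.
  apply (Filter_prod _ _ _ (fun s => s = a) (fun b => T < b)).
  - reflexivity.
  - exists T. intros; lra.
  - intros s b -> Hb. exists (RInt g a b). split.
    + apply (@RInt_correct R_CompleteNormedModule), Hex.
    + rewrite <- (RInt_Chasles g a T b), (RInt_vanishing_tail g T T b) by (auto; lra).
      change (ball (RInt g a T) eps (RInt g a T + 0)). rewrite Rplus_0_r.
      apply ball_center.
Qed.

Section Beam.

Variables (k : R -> R -> R) (r w1 w2 : R).
Hypothesis k_cont : continuous2 k.
Hypothesis r_ge0 : 0 <= r.
Hypothesis k_supp : vanishes_outside k r.
Hypothesis w_unit : w1 ^ 2 + w2 ^ 2 = 1.

Let ray x y t := k (x + t * w1) (y + t * w2).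

Lemma ray_continuous x y t : continuous (ray x y) t.
Proof. apply continuous2_along_line, k_cont. Qed.

Lemma ex_RInt_ray x y a b : ex_RInt (ray x y) a b.
Proof. apply (@ex_RInt_continuous R_CompleteNormedModule). intros; apply ray_continuous. Qed.

Lemma ray_vanishing_tail x y t : 2 * (Rabs x + Rabs y) + r <= t -> ray x y t = 0.
Proof. intros Ht. apply k_supp, ray_leaves_disc; auto. Qed.

Lemma beam_eq_RInt x y T :
  2 * (Rabs x + Rabs y) + r <= T -> beam k w1 w2 x y = RInt (ray x y) 0 T.
Proof.
  intros HT. apply RInt_gen_vanishing_tail.
  - apply ray_continuous.
  - pose proof (Rabs_pos x); pose proof (Rabs_pos y); lra.
  - intros t Ht. apply ray_vanishing_tail. lra.
Qed.

Lemma beam_sub_shift x y a :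
  beam k w1 w2 x y - beam k w1 w2 (x + a * w1) (y + a * w2) = RInt (ray x y) 0 a.
Proof.
  pose proof (Rabs_pos x); pose proof (Rabs_pos y); pose proof (Rabs_pos a).
  set (T0 := 2 * (Rabs x + Rabs y) + r).
  set (T := T0 + 4 * Rabs a).
  pose proof (Rabs_le_1_of_unit w1 w2 w_unit).
  assert (Hshift : 2 * (Rabs (x + a * w1) + Rabs (y + a * w2)) + r <= T).
  { pose proof (Rabs_triang x (a * w1)). pose proof (Rabs_triang y (a * w2)).
    rewrite Rabs_mult in *. unfold T, T0. nra. }
  rewrite (beam_eq_RInt _ _ T Hshift).
  rewrite (beam_eq_RInt x y T) by (unfold T, T0; lra).
  assert (Hcomp : RInt (ray (x + a * w1) (y + a * w2)) 0 T = RInt (ray x y) a (T + a)).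
  { replace (RInt (ray x y) a (T + a)) with (RInt (ray x y) (1 * 0 + a) (1 * T + a))
      by (f_equal; ring).
    rewrite <- RInt_comp_lin by apply ex_RInt_ray.
    apply RInt_ext. intros t _. unfold ray, scal; simpl; unfold mult; simpl.
    rewrite Rmult_1_l. f_equal; ring. }
  rewrite Hcomp.
  pose proof (Rle_abs a); pose proof (Rle_abs (- a)); rewrite Rabs_Ropp in *.
  rewrite <- (RInt_Chasles (ray x y) 0 a T), <- (RInt_Chasles (ray x y) a T (T + a))
    by apply ex_RInt_ray.
  rewrite (RInt_vanishing_tail (ray x y) T0 T (T + a)).
  - change (RInt (ray x y) 0 a + RInt (ray x y) a T - (RInt (ray x y) a T + 0)
            = RInt (ray x y) 0 a). ring.
  - apply ray_vanishing_tail.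
  - unfold T, T0; lra.
  - unfold T, T0; lra.
Qed.

Lemma is_derive_beam_along x y a :
  is_derive (fun s => beam k w1 w2 (x + s * w1) (y + s * w2)) a
    (- k (x + a * w1) (y + a * w2)).
Proof.
  apply (is_derive_ext (fun s => minus (beam k w1 w2 x y) (RInt (ray x y) 0 s))).
  { intros s. rewrite <- beam_sub_shift. unfold minus, plus, opp; simpl. ring. }
  replace (- k (x + a * w1) (y + a * w2)) with (minus zero (ray x y a))
    by (unfold minus, plus, opp, zero, ray; simpl; ring).
  apply (is_derive_minus (fun _ => beam k w1 w2 x y) (fun s => RInt (ray x y) 0 s)).
  - exact (@is_derive_const R_AbsRing R_NormedModule (beam k w1 w2 x y) a).
  - apply (is_derive_RInt (ray x y) (fun s => RInt (ray x y) 0 s) 0).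
    + apply filter_forall. intros b. apply (@RInt_correct R_CompleteNormedModule), ex_RInt_ray.
    + apply ray_continuous.
Qed.

End Beam.

Lemma is_derive_along_line (V g1 g2 : R -> R -> R) (x y w1 w2 t : R) :
  (forall a b, is_derive (fun s => V s b) a (g1 a b)) ->
  (forall a b, is_derive (fun s => V a s) b (g2 a b)) ->
  continuous2 g1 ->
  is_derive (fun s => V (x + s * w1) (y + s * w2)) t
    (g1 (x + t * w1) (y + t * w2) * w1 + g2 (x + t * w1) (y + t * w2) * w2).
Proof.
  intros H1 H2 Hc.
  set (p1 := x + t * w1). set (p2 := y + t * w2).
  assert (D1 : is_derive (fun s => x + s * w1) t w1) by (auto_derive; auto; ring).
  assert (D2 : is_derive (fun s => y + s * w2) t w2) by (auto_derive; auto; ring).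
  pose proof (is_derive_filterdiff V p1 p2 g1 (g2 p1 p2)
                (filter_forall _ (fun p => H1 (fst p) (snd p))) (H2 _ _) (Hc _ _)) as DV.
  pose proof (filterdiff_comp'_2 (fun s => x + s * w1) (fun s => y + s * w2) V t
                (fun h => scal h w1) (fun h => scal h w2)
                (fun a b => plus (scal a (g1 p1 p2)) (scal b (g2 p1 p2))) D1 D2 DV) as DC.
  unfold is_derive. eapply filterdiff_ext_lin; [exact DC|].
  intros h. simpl. unfold scal; simpl. unfold mult, plus; simpl. ring.
Qed.

Section SkewCoordinates.

Variables (G gu gv : R -> R -> R) (u1 u2 v1 v2 : R).
Hypothesis uv_indep : u1 * v2 - u2 * v1 <> 0.
Hypothesis gu_cont : continuous2 gu.
Hypothesis G_along_u : forall x y a,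
  is_derive (fun s => G (x + s * u1) (y + s * u2)) a (gu (x + a * u1) (y + a * u2)).
Hypothesis G_along_v : forall x y a,
  is_derive (fun s => G (x + s * v1) (y + s * v2)) a (gv (x + a * v1) (y + a * v2)).

Let d := u1 * v2 - u2 * v1.
Let skew (g : R -> R -> R) s t := g (s * u1 + t * v1) (s * u2 + t * v2).

Lemma is_derive_skew_1 s t : is_derive (fun s' => skew G s' t) s (skew gu s t).
Proof.
  apply (is_derive_ext (fun s' => G (t * v1 + s' * u1) (t * v2 + s' * u2))).
  - intros s'. unfold skew. f_equal; ring.
  - unfold skew. replace (s * u1 + t * v1) with (t * v1 + s * u1) by ring.
    replace (s * u2 + t * v2) with (t * v2 + s * u2) by ring.
    apply G_along_u.
Qed.

Lemma is_derive_skew_2 s t : is_derive (fun t' => skew G s t') t (skew gv s t).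
Proof.
  apply (is_derive_ext (fun t' => G (s * u1 + t' * v1) (s * u2 + t' * v2))).
  - reflexivity.
  - apply G_along_v.
Qed.

Lemma is_derive_along_line_skew x y w1 w2 t :
  is_derive (fun s => G (x + s * w1) (y + s * w2)) t
    (((w1 * v2 - w2 * v1) * gu (x + t * w1) (y + t * w2)
      + (u1 * w2 - u2 * w1) * gv (x + t * w1) (y + t * w2)) / d).
Proof.
  set (al := (w1 * v2 - w2 * v1) / d). set (be := (u1 * w2 - u2 * w1) / d).
  set (s0 := (x * v2 - y * v1) / d). set (t0 := (u1 * y - u2 * x) / d).
  (* Cramer's rule: [w = al u + be v] and [(x, y) = s0 u + t0 v]. *)
  assert (Hcoord : forall s, (s0 + s * al) * u1 + (t0 + s * be) * v1 = x + s * w1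
                          /\ (s0 + s * al) * u2 + (t0 + s * be) * v2 = y + s * w2).
  { intros s. unfold s0, t0, al, be, d in *. split; field; exact uv_indep. }
  apply (is_derive_ext (fun s => skew G (s0 + s * al) (t0 + s * be))).
  { intros s. unfold skew. destruct (Hcoord s) as [-> ->]. reflexivity. }
  replace (((w1 * v2 - w2 * v1) * gu (x + t * w1) (y + t * w2)
           + (u1 * w2 - u2 * w1) * gv (x + t * w1) (y + t * w2)) / d)
    with (skew gu (s0 + t * al) (t0 + t * be) * al
          + skew gv (s0 + t * al) (t0 + t * be) * be).
  - apply is_derive_along_line.
    + intros; apply is_derive_skew_1.
    + intros; apply is_derive_skew_2.
    + apply continuous2_comp_linear, gu_cont.
  - unfold skew. destruct (Hcoord t) as [-> ->].
    unfold al, be, d. field. exact uv_indep.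
Qed.

Lemma is_derive_partials_skew x y :
  is_derive (fun t => G t y) x ((v2 * gu x y - u2 * gv x y) / d) /\
  is_derive (fun t => G x t) y ((u1 * gv x y - v1 * gu x y) / d).
Proof.
  split.
  - apply (is_derive_ext (fun t => G (0 + t * 1) (y + t * 0))).
    { intros t. f_equal; ring. }
    replace ((v2 * gu x y - u2 * gv x y) / d)
      with (((1 * v2 - 0 * v1) * gu (0 + x * 1) (y + x * 0)
             + (u1 * 0 - u2 * 1) * gv (0 + x * 1) (y + x * 0)) / d).
    + apply is_derive_along_line_skew.
    + rewrite Rplus_0_l, Rmult_1_r, Rmult_0_r, Rplus_0_r. unfold Rdiv. ring.
  - apply (is_derive_ext (fun t => G (x + t * 0) (0 + t * 1))).
    { intros t. f_equal; ring. }
    replace ((u1 * gv x y - v1 * gu x y) / d)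
      with (((0 * v2 - 1 * v1) * gu (x + y * 0) (0 + y * 1)
             + (u1 * 1 - u2 * 0) * gv (x + y * 0) (0 + y * 1)) / d).
    + apply is_derive_along_line_skew.
    + rewrite Rplus_0_l, Rmult_1_r, Rmult_0_r, Rplus_0_r. unfold Rdiv. ring.
Qed.

End SkewCoordinates.

Lemma eq_of_is_derive_0 (F : R -> R) (a b : R) :
  (forall t, is_derive F t 0) -> F a = F b.
Proof.
  intros HF. destruct (Rtotal_order a b) as [Hab | [-> | Hba]].
  - apply eq_is_derive; auto.
  - reflexivity.
  - symmetry. apply eq_is_derive; auto.
Qed.

Section Potential.

Variables (V g1 g2 : R -> R -> R) (r : R).
Hypothesis V_d1 : forall a b, is_derive (fun s => V s b) a (g1 a b).
Hypothesis V_d2 : forall a b, is_derive (fun s => V a s) b (g2 a b).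
Hypothesis g1_cont : continuous2 g1.
Hypothesis g2_cont : continuous2 g2.
Hypothesis r_ge0 : 0 <= r.
Hypothesis g1_supp : vanishes_outside g1 r.
Hypothesis g2_supp : vanishes_outside g2 r.

Lemma potential_eq_corner a b :
  r + 1 <= Rabs a \/ r + 1 <= Rabs b -> V a b = V (r + 1) (r + 1).
Proof.
  set (M := r + 1).
  assert (Hfar : forall a b, M <= Rabs a \/ M <= Rabs b -> r ^ 2 <= a ^ 2 + b ^ 2).
  { intros a' b' Hab. rewrite <- (pow2_abs a'), <- (pow2_abs b').
    pose proof (pow2_ge_0 (Rabs a')). pose proof (pow2_ge_0 (Rabs b')).
    unfold M in Hab. destruct Hab; nra. }
  assert (Hrow : forall b, M <= Rabs b -> forall a a', V a b = V a' b).
  { intros b' Hb a1 a2. apply (eq_of_is_derive_0 (fun s => V s b')). intros t.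
    rewrite <- (g1_supp t b'); [apply V_d1 | apply Hfar; auto]. }
  assert (Hcol : forall a, M <= Rabs a -> forall b b', V a b = V a b').
  { intros a' Ha b1 b2. apply (eq_of_is_derive_0 (fun s => V a' s)). intros t.
    rewrite <- (g2_supp a' t); [apply V_d2 | apply Hfar; auto]. }
  assert (HM : M <= Rabs M) by (rewrite Rabs_right; unfold M; lra).
  intros [Ha | Hb].
  - rewrite (Hcol a Ha b M). apply Hrow, HM.
  - rewrite (Hrow b Hb a M). apply Hcol, HM.
Qed.

Lemma beam_gradient (w1 w2 x y : R) :
  w1 ^ 2 + w2 ^ 2 = 1 ->
  beam (fun a b => g1 a b * w1 + g2 a b * w2) w1 w2 x y = V (r + 1) (r + 1) - V x y.
Proof.
  intros Hw.
  set (k := fun a b => g1 a b * w1 + g2 a b * w2).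
  assert (k_cont : continuous2 k) by (apply continuous2_lincomb; auto).
  assert (k_supp : vanishes_outside k r) by (apply vanishes_outside_lincomb; auto).
  pose proof (Rabs_pos x); pose proof (Rabs_pos y).
  set (T := 2 * (Rabs x + Rabs y) + 2 * (r + 1)).
  rewrite (beam_eq_RInt k r w1 w2 k_cont r_ge0 k_supp Hw x y T) by (unfold T; lra).
  assert (Hftc : is_RInt (fun t => k (x + t * w1) (y + t * w2)) 0 T
      (minus (V (x + T * w1) (y + T * w2)) (V (x + 0 * w1) (y + 0 * w2)))).
  { apply (@is_RInt_derive R_CompleteNormedModule (fun s => V (x + s * w1) (y + s * w2))).
    - intros t _. apply is_derive_along_line; auto.
    - intros t _. apply continuous2_along_line, k_cont. }
  rewrite (is_RInt_unique _ _ _ _ Hftc), !Rmult_0_l, !Rplus_0_r.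
  rewrite potential_eq_corner; [reflexivity|].
  set (a := x + T * w1). set (b := y + T * w2).
  assert (Hfar : (2 * (r + 1)) ^ 2 <= a ^ 2 + b ^ 2)
    by (apply ray_leaves_disc; auto; unfold T; lra).
  rewrite <- (pow2_abs a), <- (pow2_abs b) in Hfar.
  pose proof (Rabs_pos a); pose proof (Rabs_pos b).
  destruct (Rle_or_lt (r + 1) (Rabs a)); [now left | right; nra].
Qed.

End Potential.

Lemma supp_in_disc_common (f1 f2 : R -> R -> R) (r1 : R) :
  supp_in_disc f1 r1 -> supp_in_disc f2 r1 ->
  exists r, 0 <= r /\ vanishes_outside f1 r /\ vanishes_outside f2 r.
Proof.
  intros [ra [Hra Ha]] [rb [Hrb Hb]].
  pose proof (Rmax_l ra rb); pose proof (Rmax_r ra rb).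
  exists (Rmax ra rb). split; [lra | split].
  - intros a b Hab. apply Ha. nra.
  - intros a b Hab. apply Hb. nra.
Qed.

Section LongitudinalVLine.

Variables (f1 f2 : R -> R -> R) (u1 u2 v1 v2 r : R).
Hypothesis u_unit : u1 ^ 2 + u2 ^ 2 = 1.
Hypothesis v_unit : v1 ^ 2 + v2 ^ 2 = 1.
Hypothesis uv_indep : u1 * v2 - u2 * v1 <> 0.
Hypothesis f1_cont : continuous2 f1.
Hypothesis f2_cont : continuous2 f2.
Hypothesis r_ge0 : 0 <= r.
Hypothesis f1_supp : vanishes_outside f1 r.
Hypothesis f2_supp : vanishes_outside f2 r.

Let fu a b := f1 a b * u1 + f2 a b * u2.
Let fv a b := f1 a b * v1 + f2 a b * v2.

Lemma potential_of_LVT_eq0 :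
  (forall x y, LVT f1 f2 u1 u2 v1 v2 x y = 0) ->
  exists V : R -> R -> R, forall x y,
    is_derive (fun t => V t y) x (f1 x y) /\ is_derive (fun t => V x t) y (f2 x y).
Proof.
  intros HL.
  assert (fu_cont : continuous2 fu) by (apply continuous2_lincomb; auto).
  assert (fv_cont : continuous2 fv) by (apply continuous2_lincomb; auto).
  assert (fu_supp : vanishes_outside fu r) by (apply vanishes_outside_lincomb; auto).
  assert (fv_supp : vanishes_outside fv r) by (apply vanishes_outside_lincomb; auto).
  set (V := fun x y => - beam fu u1 u2 x y).
  assert (V_along_u : forall x y a,
    is_derive (fun s => V (x + s * u1) (y + s * u2)) a (fu (x + a * u1) (y + a * u2))).
  { intros x y a. rewrite <- (Ropp_involutive (fu _ _)).
    apply (is_derive_opp (fun s => beam fu u1 u2 (x + s * u1) (y + s * u2))).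
    apply (is_derive_beam_along fu r); auto. }
  assert (V_along_v : forall x y a,
    is_derive (fun s => V (x + s * v1) (y + s * v2)) a (fv (x + a * v1) (y + a * v2))).
  { intros x y a. rewrite <- (Ropp_involutive (fv _ _)).
    apply (is_derive_ext (fun s => - beam fv v1 v2 (x + s * v1) (y + s * v2))).
    { intros s. unfold V. specialize (HL (x + s * v1) (y + s * v2)).
      unfold LVT in HL. fold fu fv in HL. lra. }
    apply (is_derive_opp (fun s => beam fv v1 v2 (x + s * v1) (y + s * v2))).
    apply (is_derive_beam_along fv r); auto. }
  exists V. intros x y.
  destruct (is_derive_partials_skew V fu fv u1 u2 v1 v2 uv_indep fu_cont
              V_along_u V_along_v x y) as [D1 D2].
  split.
  - replace (f1 x y) with ((v2 * fu x y - u2 * fv x y) / (u1 * v2 - u2 * v1))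
      by (unfold fu, fv; field; exact uv_indep).
    exact D1.
  - replace (f2 x y) with ((u1 * fv x y - v1 * fu x y) / (u1 * v2 - u2 * v1))
      by (unfold fu, fv; field; exact uv_indep).
    exact D2.
Qed.

Lemma LVT_gradient_eq0 (V : R -> R -> R) :
  (forall x y, is_derive (fun t => V t y) x (f1 x y) /\ is_derive (fun t => V x t) y (f2 x y)) ->
  forall x y, LVT f1 f2 u1 u2 v1 v2 x y = 0.
Proof.
  intros HV x y.
  assert (V_d1 : forall a b, is_derive (fun s => V s b) a (f1 a b)) by apply HV.
  assert (V_d2 : forall a b, is_derive (fun s => V a s) b (f2 a b)) by apply HV.
  unfold LVT.
  rewrite !(beam_gradient V f1 f2 r V_d1 V_d2 f1_cont f2_cont r_ge0 f1_supp f2_supp)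
    by assumption.
  ring.
Qed.

End LongitudinalVLine.

Theorem theorem1 (u1 u2 v1 v2 r1 : R) (f1 f2 : R -> R -> R) :
  u1 ^ 2 + u2 ^ 2 = 1 ->
  v1 ^ 2 + v2 ^ 2 = 1 ->
  u1 * v2 - u2 * v1 <> 0 ->
  0 < r1 ->
  C2_2d f1 -> C2_2d f2 ->
  supp_in_disc f1 r1 -> supp_in_disc f2 r1 ->
  ((forall x y : R, LVT f1 f2 u1 u2 v1 v2 x y = 0) <->
   exists V : R -> R -> R, forall x y : R,
     is_derive (fun t => V t y) x (f1 x y) /\
     is_derive (fun t => V x t) y (f2 x y)).
Proof.
  intros u_unit v_unit uv_indep _ [[f1_cont _] _] [[f2_cont _] _] S1 S2.
  destruct (supp_in_disc_common f1 f2 r1 S1 S2) as (r & r_ge0 & f1_supp & f2_supp).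
  split.
  - exact (potential_of_LVT_eq0 f1 f2 u1 u2 v1 v2 r
             u_unit v_unit uv_indep f1_cont f2_cont r_ge0 f1_supp f2_supp).
  - intros [V HV].
    exact (LVT_gradient_eq0 f1 f2 u1 u2 v1 v2 r
             u_unit v_unit f1_cont f2_cont r_ge0 f1_supp f2_supp V HV).
Qed.
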